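(* Let $P : \mathcal{E}\to\mathcal{B}$ be a lax functor between bicategories which is fibered in pseudogroupoids. Then for each object $b$ of $\mathcal{B}$ the fiber bicategory $P^{-1}(b)$ is a pseudogroupoid.
   Context: For a lax functor $P$ with structure 2-cells $\varphi_{g,f} : Pg\circ Pf\Rightarrow P(g\circ f)$: a 1-morphism $f : x\to y$ of $\mathcal{E}$ is cartesian if (i) for every 1-morphism $g : z\to y$ in $\mathcal{E}$, 1-morphism $h : Pz\to Px$ in $\mathcal{B}$ and invertible 2-morphism $\alpha : Pf\circ h\Rightarrow Pg$, there exist a 1-morphism $\tilde h : z\to x$ and invertible 2-morphisms $\tilde\alpha : f\circ\tilde h\Rightarrow g$, $\tilde\beta : P\tilde h\Rightarrow h$ with $\alpha\cdot(Pf*\tilde\beta) = P\tilde\alpha\cdot\varphi_{f,\tilde h}$ (a ''lift'' of $(h,\alpha)$); and (ii) for every 2-morphism $\sigma : g\Rightarrow g'$ in $\mathcal{E}$, lifts $(\tilde h,\tilde\alpha,\tilde\beta)$ of $(h,\alpha)$ and $(\tilde h',\tilde\alpha',\tilde\beta')$ of $(h',\alpha')$ (with $\alpha' : Pf\circ h'\Rightarrow Pg'$), and every 2-morphism $\delta : h\Rightarrow h'$ with $\alpha'\cdot(Pf*\delta) = P\sigma\cdot\alpha$, there is a unique 2-morphism $\tilde\delta : \tilde h\Rightarrow\tilde h'$ with $\tilde\alpha'\cdot(f*\tilde\delta) = \sigma\cdot\tilde\alpha$ and $\tilde\beta'\cdot P\tilde\delta = \delta\cdot\tilde\beta$. $P$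 is fibered in pseudogroupoids if every 1-morphism of $\mathcal{E}$ is cartesian, every 1-morphism $f : b\to P(e)$ in $\mathcal{B}$ has a 1-morphism $\tilde f : e'\to e$ in $\mathcal{E}$ with $P\tilde f = f$, and each functor $P : \mathcal{E}(x,y)\to\mathcal{B}(Px,Py)$ is fibered in groupoids (every morphism cartesian in the usual 1-categorical sense and every morphism of $\mathcal{B}(Px,Py)$ into $P(u)$ lifts to a morphism into $u$). Cartesian lifts are assumed chosen (a cleavage). The fiber bicategory $P^{-1}(b)$ has as objects the objects $e$ with $Pe=b$, as 1-morphisms the 1-morphisms $h$ of $\mathcal{E}$ with $Ph=\mathrm{id}_b$, and as 2-morphisms the 2-morphisms $\alpha$ of $\mathcal{E}$ with $P\alpha=\mathrm{id}_{\mathrm{id}_b}$, with vertical composition as in $\mathcal{E}$. The composite $g\,\hat\circ\, f$ of 1-morphisms is the domain of the chosen cartesian lift (for the functor $P:\mathcal{E}(x,z)\to\mathcal{B}(b,b)$) at $g\circ f$ of the 2-morphism $\mathrm{id}_b\Rightarrow\mathrm{id}_b\circ\mathrm{id}_b = Pg\circ Pf\Rightarrow P(g\circ f)$ (inverse unitor followed by $\varphi_{g,f}$); horizontal composition of 2-morphisms, identities and coherence isomorphisms are induced by the universal property of these lifts. A pseudogroupoid is a bicategory in which every 1-morphism is an equivalence (has a pseudo-inverse $g$ with $g\circ f\cong\mathrm{id}$, $f\circ g\cong\mathrm{id}$) and every 2-morphism is invertible. *)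

From Stdlib Require Import Logic.

Set Implicit Arguments.
Unset Strict Implicit.

(* Bicategories (Bénabou), with strict equality of 2-morphisms.        *)
(* comp1 g f = g o f ; vcomp b a = b . a (first a, then b) ;           *)
Record bicat := Bicat {
  ob : Type;
  hom1 : ob -> ob -> Type;
  hom2 : forall x y : ob, hom1 x y -> hom1 x y -> Type;
  id1 : forall x : ob, hom1 x x;
  comp1 : forall x y z : ob, hom1 y z -> hom1 x y -> hom1 x z;
  id2 : forall (x y : ob) (f : hom1 x y), hom2 f f;
  vcomp : forall (x y : ob) (f g h : hom1 x y), hom2 g h -> hom2 f g -> hom2 f h;
  hcomp : forall (x y z : ob) (g g' : hom1 y z) (f f' : hom1 x y),
      hom2 g g' -> hom2 f f' -> hom2 (comp1 g f) (comp1 g' f');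
  lunit : forall (x y : ob) (f : hom1 x y), hom2 (comp1 (id1 y) f) f;
  lunit_inv : forall (x y : ob) (f : hom1 x y), hom2 f (comp1 (id1 y) f);
  runit : forall (x y : ob) (f : hom1 x y), hom2 (comp1 f (id1 x)) f;
  runit_inv : forall (x y : ob) (f : hom1 x y), hom2 f (comp1 f (id1 x));
  assoc : forall (w x y z : ob) (h : hom1 y z) (g : hom1 x y) (f : hom1 w x),
      hom2 (comp1 (comp1 h g) f) (comp1 h (comp1 g f));
  assoc_inv : forall (w x y z : ob) (h : hom1 y z) (g : hom1 x y) (f : hom1 w x),
      hom2 (comp1 h (comp1 g f)) (comp1 (comp1 h g) f);
  vcomp_assoc : forall (x y : ob) (f g h k : hom1 x y)
      (c : hom2 h k) (b : hom2 g h) (a : hom2 f g),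
      vcomp c (vcomp b a) = vcomp (vcomp c b) a;
  vcomp_id_l : forall (x y : ob) (f g : hom1 x y) (a : hom2 f g), vcomp (id2 g) a = a;
  vcomp_id_r : forall (x y : ob) (f g : hom1 x y) (a : hom2 f g), vcomp a (id2 f) = a;
  hcomp_id : forall (x y z : ob) (g : hom1 y z) (f : hom1 x y),
      hcomp (id2 g) (id2 f) = id2 (comp1 g f);
  hcomp_vcomp : forall (x y z : ob) (g g' g'' : hom1 y z) (f f' f'' : hom1 x y)
      (b' : hom2 g' g'') (b : hom2 g g') (a' : hom2 f' f'') (a : hom2 f f'),
      hcomp (vcomp b' b) (vcomp a' a) = vcomp (hcomp b' a') (hcomp b a);
  lunit_nat : forall (x y : ob) (f f' : hom1 x y) (a : hom2 f f'),
      vcomp a (lunit f) = vcomp (lunit f') (hcomp (id2 (id1 y)) a);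
  runit_nat : forall (x y : ob) (f f' : hom1 x y) (a : hom2 f f'),
      vcomp a (runit f) = vcomp (runit f') (hcomp a (id2 (id1 x)));
  assoc_nat : forall (w x y z : ob) (h h' : hom1 y z) (g g' : hom1 x y) (f f' : hom1 w x)
      (c : hom2 h h') (b : hom2 g g') (a : hom2 f f'),
      vcomp (hcomp c (hcomp b a)) (assoc h g f)
      = vcomp (assoc h' g' f') (hcomp (hcomp c b) a);
  lunit_inv_l : forall (x y : ob) (f : hom1 x y),
      vcomp (lunit_inv f) (lunit f) = id2 (comp1 (id1 y) f);
  lunit_inv_r : forall (x y : ob) (f : hom1 x y), vcomp (lunit f) (lunit_inv f) = id2 f;
  runit_inv_l : forall (x y : ob) (f : hom1 x y),
      vcomp (runit_inv f) (runit f) = id2 (comp1 f (id1 x));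
  runit_inv_r : forall (x y : ob) (f : hom1 x y), vcomp (runit f) (runit_inv f) = id2 f;
  assoc_inv_l : forall (w x y z : ob) (h : hom1 y z) (g : hom1 x y) (f : hom1 w x),
      vcomp (assoc_inv h g f) (assoc h g f) = id2 (comp1 (comp1 h g) f);
  assoc_inv_r : forall (w x y z : ob) (h : hom1 y z) (g : hom1 x y) (f : hom1 w x),
      vcomp (assoc h g f) (assoc_inv h g f) = id2 (comp1 h (comp1 g f));
  triangle : forall (x y z : ob) (g : hom1 y z) (f : hom1 x y),
      vcomp (hcomp (id2 g) (lunit f)) (assoc g (id1 y) f)
      = hcomp (runit g) (id2 f);
  pentagon : forall (v w x y z : ob) (k : hom1 y z) (h : hom1 x y) (g : hom1 w x)
      (f : hom1 v w),
      vcomp (assoc k h (comp1 g f)) (assoc (comp1 k h) g f)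
      = vcomp (hcomp (id2 k) (assoc h g f))
          (vcomp (assoc k (comp1 h g) f) (hcomp (assoc k h g) (id2 f)))
}.

Arguments hom1 {_} _ _.
Arguments hom2 {_ _ _} _ _.
Arguments id1 {_} _.
Arguments comp1 {_ _ _ _} _ _.
Arguments id2 {_ _ _} _.
Arguments vcomp {_ _ _ _ _ _} _ _.
Arguments hcomp {_ _ _ _ _ _ _ _} _ _.
Arguments lunit {_ _ _} _.
Arguments lunit_inv {_ _ _} _.
Arguments runit {_ _ _} _.
Arguments runit_inv {_ _ _} _.
Arguments assoc {_ _ _ _ _} _ _ _.
Arguments assoc_inv {_ _ _ _ _} _ _ _.

Definition invertible2 (C : bicat) (x y : ob C) (f g : hom1 x y) (a : hom2 f g) : Prop :=
  exists b : hom2 g f, vcomp b a = id2 f /\ vcomp a b = id2 g.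

Definition cast1 (C : bicat) (a a' c c' : ob C) (p : a = a') (q : c = c')
  (f : hom1 a c) : hom1 a' c' :=
  match p in _ = a0 return hom1 a0 c' with
  | eq_refl => match q in _ = c0 return hom1 a c0 with eq_refl => f end
  end.

Definition cast2 (C : bicat) (x y : ob C) (f f' g g' : hom1 x y)
  (p : f = f') (q : g = g') (a : hom2 f g) : hom2 f' g' :=
  match p in _ = f0 return hom2 f0 g' with
  | eq_refl => match q in _ = g0 return hom2 f g0 with eq_refl => a end
  end.

Record lax_functor (E B : bicat) := LaxFunctor {
  F0 : ob E -> ob B;
  F1 : forall x y : ob E, hom1 x y -> hom1 (F0 x) (F0 y);
  F2 : forall (x y : ob E) (f g : hom1 x y), hom2 f g -> hom2 (F1 f) (F1 g);
  lphi : forall (x y z : ob E) (g : hom1 y z) (f : hom1 x y),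
      hom2 (comp1 (F1 g) (F1 f)) (F1 (comp1 g f));
  lphi0 : forall x : ob E, hom2 (id1 (F0 x)) (F1 (id1 x));
  F2_id : forall (x y : ob E) (f : hom1 x y), F2 (id2 f) = id2 (F1 f);
  F2_vcomp : forall (x y : ob E) (f g h : hom1 x y) (b : hom2 g h) (a : hom2 f g),
      F2 (vcomp b a) = vcomp (F2 b) (F2 a);
  lphi_nat : forall (x y z : ob E) (g g' : hom1 y z) (f f' : hom1 x y)
      (b : hom2 g g') (a : hom2 f f'),
      vcomp (F2 (hcomp b a)) (lphi g f) = vcomp (lphi g' f') (hcomp (F2 b) (F2 a));
  lphi_assoc : forall (w x y z : ob E) (h : hom1 y z) (g : hom1 x y) (f : hom1 w x),
      vcomp (F2 (assoc h g f)) (vcomp (lphi (comp1 h g) f) (hcomp (lphi h g) (id2 (F1 f))))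
      = vcomp (lphi h (comp1 g f))
          (vcomp (hcomp (id2 (F1 h)) (lphi g f)) (assoc (F1 h) (F1 g) (F1 f)));
  lphi_lunit : forall (x y : ob E) (f : hom1 x y),
      lunit (F1 f)
      = vcomp (F2 (lunit f)) (vcomp (lphi (id1 y) f) (hcomp (lphi0 y) (id2 (F1 f))));
  lphi_runit : forall (x y : ob E) (f : hom1 x y),
      runit (F1 f)
      = vcomp (F2 (runit f)) (vcomp (lphi f (id1 x)) (hcomp (id2 (F1 f)) (lphi0 x)))
}.

Arguments F0 {_ _} _ _.
Arguments F1 {_ _} _ {_ _} _.
Arguments F2 {_ _} _ {_ _ _ _} _.
Arguments lphi {_ _} _ {_ _ _} _ _.
Arguments lphi0 {_ _} _ _.

Section Fibrations.
Variables (E B : bicat) (P : lax_functor E B).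

(* (h~, a~, b~) is a lift of (h, a) along f (context, condition (i)) *)
Definition is_lift (x y z : ob E) (f : hom1 x y) (g : hom1 z y)
  (h : hom1 (F0 P z) (F0 P x)) (a : hom2 (comp1 (F1 P f) h) (F1 P g))
  (ht : hom1 z x) (at_ : hom2 (comp1 f ht) g) (bt : hom2 (F1 P ht) h) : Prop :=
  invertible2 a /\ invertible2 at_ /\ invertible2 bt /\
  vcomp a (hcomp (id2 (F1 P f)) bt) = vcomp (F2 P at_) (lphi P f ht).

Definition cartesian1 (x y : ob E) (f : hom1 x y) : Prop :=
  (forall (z : ob E) (g : hom1 z y) (h : hom1 (F0 P z) (F0 P x))
     (a : hom2 (comp1 (F1 P f) h) (F1 P g)),
     invertible2 a ->
     exists (ht : hom1 z x) (at_ : hom2 (comp1 f ht) g) (bt : hom2 (F1 P ht) h),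
       is_lift a at_ bt)
  /\
  (forall (z : ob E) (g g' : hom1 z y) (s : hom2 g g')
     (h h' : hom1 (F0 P z) (F0 P x))
     (a : hom2 (comp1 (F1 P f) h) (F1 P g)) (a' : hom2 (comp1 (F1 P f) h') (F1 P g'))
     (ht : hom1 z x) (at_ : hom2 (comp1 f ht) g) (bt : hom2 (F1 P ht) h)
     (ht' : hom1 z x) (at' : hom2 (comp1 f ht') g') (bt' : hom2 (F1 P ht') h'),
     is_lift a at_ bt -> is_lift a' at' bt' ->
     forall d : hom2 h h',
       vcomp a' (hcomp (id2 (F1 P f)) d) = vcomp (F2 P s) a ->
       exists! dt : hom2 ht ht',
         vcomp at' (hcomp (id2 f) dt) = vcomp s at_ /\
         vcomp bt' (F2 P dt) = vcomp d bt).

(* cartesian morphism (1-categorical sense) for the functor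
   P : E(x,y) -> B(Px,Py) *)
Definition cartesian2 (x y : ob E) (v u : hom1 x y) (a : hom2 v u) : Prop :=
  forall (w : hom1 x y) (c : hom2 w u) (d : hom2 (F1 P w) (F1 P v)),
    vcomp (F2 P a) d = F2 P c ->
    exists! ct : hom2 w v, F2 P ct = d /\ vcomp a ct = c.

Definition local_fibered_in_groupoids (x y : ob E) : Prop :=
  (forall (v u : hom1 x y) (a : hom2 v u), cartesian2 a) /\
  (forall (u : hom1 x y) (k : hom1 (F0 P x) (F0 P y)) (b : hom2 k (F1 P u)),
     exists (v : hom1 x y) (e : F1 P v = k) (a : hom2 v u),
       cast2 e eq_refl (F2 P a) = b).

Definition fibered_in_pseudogroupoids : Prop :=
  (forall (x y : ob E) (f : hom1 x y), cartesian1 f) /\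
  (forall (e : ob E) (b : ob B) (f : hom1 b (F0 P e)),
     exists (e' : ob E) (p : F0 P e' = b) (ft : hom1 e' e),
       cast1 p eq_refl (F1 P ft) = f) /\
  (forall x y : ob E, local_fibered_in_groupoids x y).

(* A cleavage: chosen (cartesian) lifts for the local functors
   P : E(x,y) -> B(Px,Py).  (Every 2-morphism is cartesian when P is
   fibered in pseudogroupoids, so a chosen lift is a chosen cartesian lift.) *)
Definition cleavage : Type :=
  forall (x y : ob E) (u : hom1 x y) (k : hom1 (F0 P x) (F0 P y)) (b : hom2 k (F1 P u)),
    { v : hom1 x y & { e : F1 P v = k & { a : hom2 v u | cast2 e eq_refl (F2 P a) = b } } }.

(* The fiber bicategory P^{-1}(b).  An object is an object x of E with *)
(* a proof px : P x = b.  The 1-morphism id_b, seen as a 1-morphism     *)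
(* P x -> P y, is [idover px py].                                       *)
Definition idover (a c b : ob B) (pa : a = b) (pc : c = b) : hom1 a c :=
  match eq_sym pc in _ = c0 return hom1 a c0 with
  | eq_refl =>
      match eq_sym pa in _ = a0 return hom1 a0 b with eq_refl => id1 b end
  end.

Definition idover_comp (a c d b : ob B) (pa : a = b) (pc : c = b) (pd : d = b) :
  hom2 (idover pa pd) (comp1 (idover pc pd) (idover pa pc)).
Proof. destruct pa, pc, pd. exact (lunit_inv (id1 d)). Defined.

Definition idover_id (a b : ob B) (pa : a = b) : hom2 (idover pa pa) (id1 a).
Proof. destruct pa. exact (id2 (id1 a)). Defined.

Definition eqcell (x y : ob B) (f g : hom1 x y) (e : f = g) : hom2 f g :=
  match e in _ = g0 return hom2 f g0 with eq_refl => id2 f end.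

Definition fhom1 (b : ob B) (x y : ob E) (px : F0 P x = b) (py : F0 P y = b) : Type :=
  { h : hom1 x y & F1 P h = idover px py }.

Definition is_fhom2 (b : ob B) (x y : ob E) (px : F0 P x = b) (py : F0 P y = b)
  (h h' : fhom1 px py) (a : hom2 (projT1 h) (projT1 h')) : Prop :=
  cast2 (projT2 h) (projT2 h') (F2 P a) = id2 (idover px py).
Arguments is_fhom2 {b x y px py} h h' a.

(* the composite  k ^o h : domain of the chosen lift at k o h of
   id_b => id_b o id_b = Pk o Ph => P(k o h) *)
Definition fcomp (cl : cleavage) (b : ob B) (x y z : ob E)
  (px : F0 P x = b) (py : F0 P y = b) (pz : F0 P z = b)
  (k : fhom1 py pz) (h : fhom1 px py) : fhom1 px pz :=
  let bcell :=
    vcomp (lphi P (projT1 k) (projT1 h))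
      (vcomp (hcomp (eqcell (eq_sym (projT2 k))) (eqcell (eq_sym (projT2 h))))
         (idover_comp px py pz)) in
  let l := cl x z (comp1 (projT1 k) (projT1 h)) (idover px pz) bcell in
  existT _ (projT1 l) (projT1 (projT2 l)).

(* the identity of (x,px): domain of the chosen lift at id_x of
   id_b => id_{Px} => P(id_x) *)
Definition fid (cl : cleavage) (b : ob B) (x : ob E) (px : F0 P x = b) : fhom1 px px :=
  let bcell := vcomp (lphi0 P x) (idover_id px) in
  let l := cl x x (id1 x) (idover px px) bcell in
  existT _ (projT1 l) (projT1 (projT2 l)).

Definition finvertible2 (b : ob B) (x y : ob E) (px : F0 P x = b) (py : F0 P y = b)
  (h h' : fhom1 px py) (a : hom2 (projT1 h) (projT1 h')) : Prop :=
  exists a' : hom2 (projT1 h') (projT1 h),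
    is_fhom2 h' h a' /\ vcomp a' a = id2 (projT1 h) /\ vcomp a a' = id2 (projT1 h').
Arguments finvertible2 {b x y px py} h h' a.

Definition fiber_is_pseudogroupoid (cl : cleavage) (b : ob B) : Prop :=
  (forall (x y : ob E) (px : F0 P x = b) (py : F0 P y = b)
     (h h' : fhom1 px py) (a : hom2 (projT1 h) (projT1 h')),
     is_fhom2 h h' a -> finvertible2 h h' a)
  /\
  (forall (x y : ob E) (px : F0 P x = b) (py : F0 P y = b) (f : fhom1 px py),
     exists g : fhom1 py px,
       (exists a : hom2 (projT1 (fcomp cl g f)) (projT1 (fid cl px)),
          is_fhom2 (fcomp cl g f) (fid cl px) a /\
          finvertible2 (fcomp cl g f) (fid cl px) a) /\
       (exists a : hom2 (projT1 (fcomp cl f g)) (projT1 (fid cl py)),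
          is_fhom2 (fcomp cl f g) (fid cl py) a /\
          finvertible2 (fcomp cl f g) (fid cl py) a)).

End Fibrations.

(* Fiber 2-cells lie over identities, and a functor fibered in groupoids reflects
   invertibility, so they are invertible.  For a fiber 1-morphism [f], lifting [id_b]
   through the cartesian [f] gives [g] with an invertible [rho : f o g => id] lying over
   the canonical cell, and the local lifting property turns [rho] into a fiber 2-cell
   [f ^o g => id].  Doing the same for [g] gives [f'] with [g o f' ≅ id], hence
   [f ≅ f'] and [lphi g f] is invertible; then [g ^o f] and [id] are two lifts of one
   cell along the cartesian [f], and condition (ii) joins them by a fiber 2-cell. *)

From Stdlib Require Import ProofIrrelevance.

Set Implicit Arguments.
Unset Strict Implicit.

Notation "b • a" := (vcomp b a) (at level 40, left associativity).
Notation "b ⋆ a" := (hcomp b a) (at level 30, no associativity).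

Section Bicategory.
Variable C : bicat.

Lemma eqcell_pi (x y : ob C) (f g : hom1 x y) (p q : f = g) : eqcell p = eqcell q.
Proof. now rewrite (proof_irrelevance _ p q). Qed.

Lemma eqcell_refl (x y : ob C) (f : hom1 x y) (e : f = f) : eqcell e = id2 f.
Proof. exact (eqcell_pi e eq_refl). Qed.

Lemma eqcell_trans (x y : ob C) (f g h : hom1 x y) (p : f = g) (q : g = h) :
  eqcell q • eqcell p = eqcell (eq_trans p q).
Proof. destruct q, p. apply vcomp_id_l. Qed.

Lemma eqcell_sym_l (x y : ob C) (f g : hom1 x y) (p : f = g) :
  eqcell (eq_sym p) • eqcell p = id2 f.
Proof. rewrite eqcell_trans. apply eqcell_refl. Qed.

Lemma eqcell_sym_r (x y : ob C) (f g : hom1 x y) (p : f = g) :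
  eqcell p • eqcell (eq_sym p) = id2 g.
Proof. rewrite eqcell_trans. apply eqcell_refl. Qed.

Lemma cast2_eqcell (x y : ob C) (f f' g g' : hom1 x y) (p : f = f') (q : g = g')
  (a : hom2 f g) :
  cast2 p q a = eqcell q • a • eqcell (eq_sym p).
Proof. destruct p, q. cbn. now rewrite vcomp_id_l, vcomp_id_r. Qed.

Lemma cast2_refl_r (x y : ob C) (f f' g : hom1 x y) (e : f = f') (a : hom2 f g)
  (a' : hom2 f' g) :
  cast2 e eq_refl a = a' -> a = a' • eqcell e.
Proof.
  rewrite cast2_eqcell. intros <-. cbn.
  now rewrite vcomp_id_l, <- vcomp_assoc, eqcell_sym_l, vcomp_id_r.
Qed.

Lemma vcomp_tail2 (x y : ob C) (e f g h : hom1 x y) (a : hom2 g h) (b : hom2 f g)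
  (c : hom2 f h) :
  a • b = c -> forall r : hom2 e f, a • (b • r) = c • r.
Proof. intros <- r. apply vcomp_assoc. Qed.

Lemma vcomp_tail3 (x y : ob C) (d e f g h : hom1 x y) (a : hom2 g h) (b : hom2 f g)
  (c : hom2 e f) (t : hom2 e h) :
  a • (b • c) = t -> forall r : hom2 d e, a • (b • (c • r)) = t • r.
Proof. intros <- r. now rewrite !vcomp_assoc. Qed.

Lemma lwhisker_vcomp (x y z : ob C) (g : hom1 y z) (f f' f'' : hom1 x y)
  (a' : hom2 f' f'') (a : hom2 f f') :
  id2 g ⋆ (a' • a) = (id2 g ⋆ a') • (id2 g ⋆ a).
Proof. now rewrite <- hcomp_vcomp, vcomp_id_l. Qed.

Lemma rwhisker_vcomp (x y z : ob C) (g g' g'' : hom1 y z) (f : hom1 x y)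
  (b' : hom2 g' g'') (b : hom2 g g') :
  (b' • b) ⋆ id2 f = (b' ⋆ id2 f) • (b ⋆ id2 f).
Proof. now rewrite <- hcomp_vcomp, vcomp_id_l. Qed.

Lemma hcomp_rwhisker_lwhisker (x y z : ob C) (g g' : hom1 y z) (f f' : hom1 x y)
  (b : hom2 g g') (a : hom2 f f') :
  b ⋆ a = (b ⋆ id2 f') • (id2 g ⋆ a).
Proof. now rewrite <- hcomp_vcomp, vcomp_id_l, vcomp_id_r. Qed.

Lemma hcomp_lwhisker_rwhisker (x y z : ob C) (g g' : hom1 y z) (f f' : hom1 x y)
  (b : hom2 g g') (a : hom2 f f') :
  b ⋆ a = (id2 g' ⋆ a) • (b ⋆ id2 f).
Proof. now rewrite <- hcomp_vcomp, vcomp_id_l, vcomp_id_r. Qed.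

Lemma invertible2_id (x y : ob C) (f : hom1 x y) : invertible2 (id2 f).
Proof. exists (id2 f). now rewrite vcomp_id_l. Qed.

Lemma invertible2_vcomp (x y : ob C) (f g h : hom1 x y) (b : hom2 g h) (a : hom2 f g) :
  invertible2 b -> invertible2 a -> invertible2 (b • a).
Proof.
  intros [b' [Hb1 Hb2]] [a' [Ha1 Ha2]]. exists (a' • b'). split.
  - now rewrite vcomp_assoc, <- (vcomp_assoc a'), Hb1, vcomp_id_r.
  - now rewrite vcomp_assoc, <- (vcomp_assoc b), Ha2, vcomp_id_r.
Qed.

Lemma invertible2_hcomp (x y z : ob C) (g g' : hom1 y z) (f f' : hom1 x y)
  (b : hom2 g g') (a : hom2 f f') :
  invertible2 b -> invertible2 a -> invertible2 (b ⋆ a).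
Proof.
  intros [b' [Hb1 Hb2]] [a' [Ha1 Ha2]]. exists (b' ⋆ a').
  now rewrite <- !hcomp_vcomp, Hb1, Ha1, Hb2, Ha2, !hcomp_id.
Qed.

Lemma invertible2_inverse (x y : ob C) (f g : hom1 x y) (a : hom2 f g) (a' : hom2 g f) :
  a' • a = id2 f -> a • a' = id2 g -> invertible2 a'.
Proof. intros. now exists a. Qed.

Lemma invertible2_eqcell (x y : ob C) (f g : hom1 x y) (p : f = g) : invertible2 (eqcell p).
Proof. exists (eqcell (eq_sym p)). split; [apply eqcell_sym_l | apply eqcell_sym_r]. Qed.

Lemma invertible2_lunit (x y : ob C) (f : hom1 x y) : invertible2 (lunit f).
Proof. exists (lunit_inv f). split; [apply lunit_inv_l | apply lunit_inv_r]. Qed.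

Lemma invertible2_runit (x y : ob C) (f : hom1 x y) : invertible2 (runit f).
Proof. exists (runit_inv f). split; [apply runit_inv_l | apply runit_inv_r]. Qed.

Lemma invertible2_runit_inv (x y : ob C) (f : hom1 x y) : invertible2 (runit_inv f).
Proof. apply (invertible2_inverse (runit_inv_l f) (runit_inv_r f)). Qed.

Lemma invertible2_assoc (w x y z : ob C) (h : hom1 y z) (g : hom1 x y) (f : hom1 w x) :
  invertible2 (assoc h g f).
Proof. exists (assoc_inv h g f). split; [apply assoc_inv_l | apply assoc_inv_r]. Qed.

Lemma invertible2_assoc_inv (w x y z : ob C) (h : hom1 y z) (g : hom1 x y)
  (f : hom1 w x) :
  invertible2 (assoc_inv h g f).
Proof. apply (invertible2_inverse (assoc_inv_l h g f) (assoc_inv_r h g f)). Qed.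

Lemma invertible2_vcomp_r (x y : ob C) (f g h : hom1 x y) (b : hom2 g h) (a : hom2 f g) :
  invertible2 (b • a) -> invertible2 b -> invertible2 a.
Proof.
  intros Hba [b' [Hb1 Hb2]].
  replace a with (b' • (b • a)) by now rewrite vcomp_assoc, Hb1, vcomp_id_l.
  apply invertible2_vcomp; [now exists b | exact Hba].
Qed.

Lemma invertible2_vcomp_l (x y : ob C) (f g h : hom1 x y) (b : hom2 g h) (a : hom2 f g) :
  invertible2 (b • a) -> invertible2 a -> invertible2 b.
Proof.
  intros Hba [a' [Ha1 Ha2]].
  replace b with (b • a • a') by now rewrite <- vcomp_assoc, Ha2, vcomp_id_r.
  apply invertible2_vcomp; [exact Hba | now exists a].
Qed.

Lemma vcomp_inj_r (x y : ob C) (f g h : hom1 x y) (c : hom2 f g) (a b : hom2 g h) :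
  invertible2 c -> a • c = b • c -> a = b.
Proof.
  intros [c' [_ Hc]] E.
  now rewrite <- (vcomp_id_r a), <- (vcomp_id_r b), <- Hc, !vcomp_assoc, E.
Qed.

Lemma vcomp_inj_l (x y : ob C) (f g h : hom1 x y) (c : hom2 g h) (a b : hom2 f g) :
  invertible2 c -> c • a = c • b -> a = b.
Proof.
  intros [c' [Hc _]] E.
  now rewrite <- (vcomp_id_l a), <- (vcomp_id_l b), <- Hc, <- !vcomp_assoc, E.
Qed.

Lemma invertible2_rwhisker_transport (x y z : ob C) (g g' : hom1 y z) (f f' : hom1 x y)
  (b : hom2 g g') (a : hom2 f f') :
  invertible2 a -> invertible2 (b ⋆ id2 f) -> invertible2 (b ⋆ id2 f').
Proof.
  intros Ha Hb. apply (invertible2_vcomp_l (a := id2 g ⋆ a)).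
  - rewrite <- hcomp_rwhisker_lwhisker, hcomp_lwhisker_rwhisker.
    apply invertible2_vcomp; [apply invertible2_hcomp; [apply invertible2_id|]|]; assumption.
  - apply invertible2_hcomp; [apply invertible2_id | exact Ha].
Qed.

Lemma invertible2_of_rwhisker_id1 (x y : ob C) (f f' : hom1 x y) (a : hom2 f f') :
  invertible2 (a ⋆ id2 (id1 x)) -> invertible2 a.
Proof.
  intro Ha. apply (invertible2_vcomp_l (a := runit f)); [| apply invertible2_runit].
  rewrite runit_nat. apply invertible2_vcomp; [apply invertible2_runit | exact Ha].
Qed.

Lemma lwhisker_id1_inj (x y : ob C) (f g : hom1 x y) (a b : hom2 f g) :
  id2 (id1 y) ⋆ a = id2 (id1 y) ⋆ b -> a = b.
Proof.
  intro E. apply (vcomp_inj_r (invertible2_lunit f)). now rewrite !lunit_nat, E.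
Qed.

Lemma rwhisker_id1_inj (x y : ob C) (f g : hom1 x y) (a b : hom2 f g) :
  a ⋆ id2 (id1 x) = b ⋆ id2 (id1 x) -> a = b.
Proof.
  intro E. apply (vcomp_inj_r (invertible2_runit f)). now rewrite !runit_nat, E.
Qed.

(* Kelly's lemmas: consequences of the triangle and pentagon axioms. *)
Lemma lunit_comp (x y z : ob C) (g : hom1 y z) (f : hom1 x y) :
  lunit (comp1 g f) • assoc (id1 z) g f = lunit g ⋆ id2 f.
Proof.
  apply lwhisker_id1_inj.
  apply (vcomp_inj_r
           (c := assoc (id1 z) (comp1 (id1 z) g) f • (assoc (id1 z) (id1 z) g ⋆ id2 f))).
  { apply invertible2_vcomp; [apply invertible2_assoc|].
    apply invertible2_hcomp; [apply invertible2_assoc | apply invertible2_id]. }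
  rewrite lwhisker_vcomp, <- !vcomp_assoc, <- pentagon, vcomp_assoc, triangle, <- hcomp_id,
    assoc_nat, <- triangle, rwhisker_vcomp.
  now rewrite (vcomp_assoc (id2 _ ⋆ (lunit g ⋆ _))), assoc_nat, <- !vcomp_assoc.
Qed.

Lemma lunit_comp_inv (x y z : ob C) (g : hom1 y z) (f : hom1 x y) :
  (lunit g ⋆ id2 f) • assoc_inv (id1 z) g f = lunit (comp1 g f).
Proof. now rewrite <- lunit_comp, <- vcomp_assoc, assoc_inv_r, vcomp_id_r. Qed.

Lemma lunit_id1_runit (x : ob C) : lunit (id1 x) = runit (id1 x).
Proof.
  assert (Hll : lunit (comp1 (id1 x) (id1 x)) = id2 (id1 x) ⋆ lunit (id1 x)).
  { apply (vcomp_inj_l (invertible2_lunit (id1 x))). apply lunit_nat. }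
  apply rwhisker_id1_inj. now rewrite <- lunit_comp, <- triangle, Hll.
Qed.

Definition idover_comp_inv (a c d b : ob C) (pa : a = b) (pc : c = b) (pd : d = b) :
  hom2 (comp1 (idover pc pd) (idover pa pc)) (idover pa pd).
Proof. destruct pa, pc, pd. exact (lunit (id1 d)). Defined.

Lemma idover_comp_inv_l (a c d b : ob C) (pa : a = b) (pc : c = b) (pd : d = b) :
  idover_comp_inv pa pc pd • idover_comp pa pc pd = id2 _.
Proof. destruct pa, pc, pd. apply lunit_inv_r. Qed.

Lemma idover_comp_inv_r (a c d b : ob C) (pa : a = b) (pc : c = b) (pd : d = b) :
  idover_comp pa pc pd • idover_comp_inv pa pc pd = id2 _.
Proof. destruct pa, pc, pd. apply lunit_inv_l. Qed.

Lemma invertible2_idover_comp (a c d b : ob C) (pa : a = b) (pc : c = b) (pd : d = b) :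
  invertible2 (idover_comp pa pc pd).
Proof.
  exists (idover_comp_inv pa pc pd). split; [apply idover_comp_inv_l | apply idover_comp_inv_r].
Qed.

Lemma invertible2_idover_comp_inv (a c d b : ob C) (pa : a = b) (pc : c = b) (pd : d = b) :
  invertible2 (idover_comp_inv pa pc pd).
Proof. apply (invertible2_inverse (idover_comp_inv_l pa pc pd) (idover_comp_inv_r pa pc pd)). Qed.

Lemma invertible2_idover_id (a b : ob C) (pa : a = b) : invertible2 (idover_id pa).
Proof. destruct pa. apply invertible2_id. Qed.

(* [F] and [G] are [id_b] in disguise, so after transport this is Kelly's
   [lunit (id1 b) = runit (id1 b)]. *)
Lemma idover_triangle (a c b : ob C) (pa : a = b) (pc : c = b) (F : hom1 a c) (G : hom1 c a)
  (eF : F = idover pa pc) (eG : G = idover pc pa) :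
  lunit F • ((idover_id pc • idover_comp_inv pc pa pc • (eqcell eF ⋆ eqcell eG)) ⋆ id2 F)
  • assoc_inv F G F
  • (id2 F ⋆ ((eqcell (eq_sym eG) ⋆ eqcell (eq_sym eF)) • idover_comp pa pc pa))
  = runit F • (id2 F ⋆ idover_id pa).
Proof.
  subst F G. destruct pa, pc. cbn.
  rewrite !hcomp_id, !vcomp_id_l, !vcomp_id_r.
  rewrite <- (vcomp_assoc (lunit _)), lunit_comp_inv, <- vcomp_assoc, <- lunit_nat,
    vcomp_assoc, lunit_inv_r, vcomp_id_l.
  apply lunit_id1_runit.
Qed.

Lemma pseudo_inverse_iso (x y : ob C) (f f' : hom1 x y) (g : hom1 y x)
  (rho : hom2 (comp1 f g) (id1 y)) (rho' : hom2 (comp1 g f') (id1 x)) :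
  invertible2 rho -> invertible2 rho' -> exists mu : hom2 f' f, invertible2 mu.
Proof.
  intros Hrho [rho'' [Hr1 Hr2]].
  assert (Heps : invertible2 (lunit f' • (rho ⋆ id2 f') • assoc_inv f g f'
                              • (id2 f ⋆ rho'') • runit_inv f)).
  { repeat apply invertible2_vcomp;
      auto using invertible2_lunit, invertible2_assoc_inv, invertible2_runit_inv.
    - apply invertible2_hcomp; auto using invertible2_id.
    - apply invertible2_hcomp; [apply invertible2_id | now exists rho']. }
  destruct Heps as [mu [Hm1 Hm2]]. exists mu. eexists; split; eassumption.
Qed.

End Bicategory.

Section LaxFunctor.
Variables (E B : bicat) (P : lax_functor E B).

Lemma F2_invertible (x y : ob E) (f g : hom1 x y) (a : hom2 f g) :
  invertible2 a -> invertible2 (F2 P a).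
Proof. intros [a' [H1 H2]]. exists (F2 P a'). now rewrite <- !F2_vcomp, H1, H2, !F2_id. Qed.

Lemma lphi_assoc_inv (w x y z : ob E) (h : hom1 y z) (g : hom1 x y) (f : hom1 w x) :
  F2 P (assoc_inv h g f) • (lphi P h (comp1 g f) • (id2 (F1 P h) ⋆ lphi P g f))
  = lphi P (comp1 h g) f
    • ((lphi P h g ⋆ id2 (F1 P f)) • assoc_inv (F1 P h) (F1 P g) (F1 P f)).
Proof.
  apply (vcomp_inj_r (invertible2_assoc (F1 P h) (F1 P g) (F1 P f))).
  rewrite <- !vcomp_assoc, assoc_inv_l, vcomp_id_r, <- lphi_assoc, !vcomp_assoc,
    <- F2_vcomp, assoc_inv_l, F2_id, vcomp_id_l.
  reflexivity.
Qed.

Lemma lphi_invertible_transport (x y z : ob E) (f : hom1 y z) (m m' : hom1 x y)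
  (mu : hom2 m m') :
  invertible2 mu -> invertible2 (lphi P f m) -> invertible2 (lphi P f m').
Proof.
  intros Hmu Hphi. pose proof (lphi_nat P (id2 f) mu) as Hnat. rewrite F2_id in Hnat.
  apply (invertible2_vcomp_l (a := id2 (F1 P f) ⋆ F2 P mu)).
  - rewrite <- Hnat. apply invertible2_vcomp; [| exact Hphi].
    apply F2_invertible, invertible2_hcomp; [apply invertible2_id | exact Hmu].
  - apply invertible2_hcomp; [apply invertible2_id | now apply F2_invertible].
Qed.

Lemma is_lift_lphi_invertible (x y z : ob E) (f : hom1 x y) (g : hom1 z y)
  (h : hom1 (F0 P z) (F0 P x)) (a : hom2 (comp1 (F1 P f) h) (F1 P g))
  (ht : hom1 z x) (at_ : hom2 (comp1 f ht) g) (bt : hom2 (F1 P ht) h) :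
  is_lift a at_ bt -> invertible2 (lphi P f ht).
Proof.
  intros [Ha [Hat [Hbt Hlift]]].
  apply (invertible2_vcomp_r (b := F2 P at_)); [rewrite <- Hlift | now apply F2_invertible].
  apply invertible2_vcomp; [exact Ha | apply invertible2_hcomp; auto using invertible2_id].
Qed.

Lemma is_fhom2_iff (b : ob B) (x y : ob E) (px : F0 P x = b) (py : F0 P y = b)
  (h h' : fhom1 px py) (a : hom2 (projT1 h) (projT1 h')) :
  is_fhom2 (h := h) (h' := h') a <-> eqcell (projT2 h') • F2 P a = eqcell (projT2 h).
Proof.
  unfold is_fhom2. rewrite cast2_eqcell. split; intro Ha.
  - now rewrite <- (vcomp_id_l (eqcell (projT2 h))), <- Ha, <- vcomp_assoc, eqcell_sym_l,
      vcomp_id_r.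
  - now rewrite Ha, eqcell_sym_r.
Qed.

(* The cells [id_b => P k o P h => P (k o h)] and [id_b => P (id x)] at which
   [fcomp] and [fid] are the chosen lifts. *)
Definition comp_over (b : ob B) (x y z : ob E) (px : F0 P x = b) (py : F0 P y = b)
  (pz : F0 P z = b) (k : fhom1 py pz) (h : fhom1 px py) :
  hom2 (idover px pz) (F1 P (comp1 (projT1 k) (projT1 h))) :=
  lphi P (projT1 k) (projT1 h)
  • ((eqcell (eq_sym (projT2 k)) ⋆ eqcell (eq_sym (projT2 h))) • idover_comp px py pz).

Definition id_over (b : ob B) (x : ob E) (px : F0 P x = b) :
  hom2 (idover px px) (F1 P (id1 x)) :=
  lphi0 P x • idover_id px.

Lemma F2_cleavage (cl : cleavage P) (x y : ob E) (u : hom1 x y)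
  (k : hom1 (F0 P x) (F0 P y)) (c : hom2 k (F1 P u)) :
  F2 P (proj1_sig (projT2 (projT2 (cl x y u k c))))
  = c • eqcell (projT1 (projT2 (cl x y u k c))).
Proof. destruct (cl x y u k c) as [v [e [a Ha]]]. exact (cast2_refl_r Ha). Qed.

Definition fcomp_cell (cl : cleavage P) (b : ob B) (x y z : ob E) (px : F0 P x = b)
  (py : F0 P y = b) (pz : F0 P z = b) (k : fhom1 py pz) (h : fhom1 px py) :
  hom2 (projT1 (fcomp cl k h)) (comp1 (projT1 k) (projT1 h)) :=
  proj1_sig (projT2 (projT2 (cl x z _ (idover px pz) (comp_over k h)))).

Lemma F2_fcomp_cell (cl : cleavage P) (b : ob B) (x y z : ob E) (px : F0 P x = b)
  (py : F0 P y = b) (pz : F0 P z = b) (k : fhom1 py pz) (h : fhom1 px py) :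
  F2 P (fcomp_cell cl k h) = comp_over k h • eqcell (projT2 (fcomp cl k h)).
Proof. apply F2_cleavage. Qed.

Definition fid_cell (cl : cleavage P) (b : ob B) (x : ob E) (px : F0 P x = b) :
  hom2 (projT1 (fid cl px)) (id1 x) :=
  proj1_sig (projT2 (projT2 (cl x x (id1 x) (idover px px) (id_over px)))).

Lemma F2_fid_cell (cl : cleavage P) (b : ob B) (x : ob E) (px : F0 P x = b) :
  F2 P (fid_cell cl px) = id_over px • eqcell (projT2 (fid cl px)).
Proof. apply F2_cleavage. Qed.

End LaxFunctor.

Section Fibration.
Variables (E B : bicat) (P : lax_functor E B).
Hypothesis HP : fibered_in_pseudogroupoids P.

Lemma invertible2_of_F2 (x y : ob E) (v u : hom1 x y) (a : hom2 v u) :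
  invertible2 (F2 P a) -> invertible2 a.
Proof.
  intros [d [Hd1 Hd2]].
  pose proof HP as [_ [_ Hloc]]. destruct (Hloc x y) as [Hcart _].
  destruct (Hcart v u a u (id2 u) d) as [a' [[Ha'1 Ha'2] _]].
  { now rewrite Hd2, F2_id. }
  exists a'. split; [| exact Ha'2].
  destruct (Hcart v u a v a (id2 (F1 P v))) as [c [_ Hunique]].
  { apply vcomp_id_r. }
  transitivity c.
  - symmetry. apply Hunique. split.
    + now rewrite F2_vcomp, Ha'1, Hd1.
    + now rewrite vcomp_assoc, Ha'2, vcomp_id_l.
  - apply Hunique. split; [apply F2_id | apply vcomp_id_r].
Qed.

Lemma local_lift (x y : ob E) (u : hom1 x y) (k : hom1 (F0 P x) (F0 P y))
  (c : hom2 k (F1 P u)) :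
  invertible2 c ->
  exists (v : hom1 x y) (e : F1 P v = k) (a : hom2 v u),
    F2 P a = c • eqcell e /\ invertible2 a.
Proof.
  intro Hc. pose proof HP as [_ [_ Hloc]].
  destruct (proj2 (Hloc x y) u k c) as [v [e [a Ha]]].
  apply cast2_refl_r in Ha. exists v, e, a. split; [exact Ha |].
  apply invertible2_of_F2. rewrite Ha.
  apply invertible2_vcomp; [exact Hc | apply invertible2_eqcell].
Qed.

(* Lifting [runit] along the cartesian [id1 x] and comparing with the unit law
   [lphi_lunit] shows that [lphi0 x] becomes invertible once whiskered. *)
Lemma lphi0_invertible (x : ob E) : invertible2 (lphi0 P x).
Proof.
  pose proof HP as [Hcart _].
  destruct (proj1 (Hcart x x (id1 x)) x (id1 x) (id1 (F0 P x)) (runit (F1 P (id1 x)))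
              (invertible2_runit _)) as [ht [at_ [bt Hlift]]].
  pose proof (is_lift_lphi_invertible Hlift) as Hphi.
  destruct Hlift as [_ [_ [Hbt _]]].
  apply invertible2_of_rwhisker_id1, (invertible2_rwhisker_transport Hbt).
  apply (invertible2_vcomp_r (b := lphi P (id1 x) ht)); [| exact Hphi].
  apply (invertible2_vcomp_r (b := F2 P (lunit ht))); [| apply F2_invertible, invertible2_lunit].
  rewrite <- lphi_lunit. apply invertible2_lunit.
Qed.

Lemma fiber_hom2_finvertible (b : ob B) (x y : ob E) (px : F0 P x = b) (py : F0 P y = b)
  (h h' : fhom1 px py) (a : hom2 (projT1 h) (projT1 h')) :
  is_fhom2 (h := h) (h' := h') a -> finvertible2 (h := h) (h' := h') a.
Proof.
  intro Ha. apply is_fhom2_iff in Ha.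
  assert (Hinv : invertible2 a).
  { apply invertible2_of_F2, (invertible2_vcomp_r (b := eqcell (projT2 h')));
      rewrite ?Ha; apply invertible2_eqcell. }
  destruct Hinv as [a' [Ha1 Ha2]]. exists a'. split; [| split; assumption].
  apply is_fhom2_iff.
  now rewrite <- Ha, <- vcomp_assoc, <- F2_vcomp, Ha2, F2_id, vcomp_id_r.
Qed.

Lemma fiber_cell_of_lifts (b : ob B) (x y z : ob E) (px : F0 P x = b) (pz : F0 P z = b)
  (f : hom1 x y) (g : hom1 z y) (a : hom2 (comp1 (F1 P f) (idover pz px)) (F1 P g))
  (h h' : fhom1 pz px) (at_ : hom2 (comp1 f (projT1 h)) g)
  (at' : hom2 (comp1 f (projT1 h')) g) :
  is_lift a at_ (eqcell (projT2 h)) -> is_lift a at' (eqcell (projT2 h')) ->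
  exists d : hom2 (projT1 h) (projT1 h'), is_fhom2 (h := h) (h' := h') d.
Proof.
  intros Hl Hl'. pose proof HP as [Hcart _].
  destruct (proj2 (Hcart x y f) z g g (id2 g) _ _ a a _ _ _ _ _ _ Hl Hl' (id2 _))
    as [d [[_ Hd] _]].
  { now rewrite hcomp_id, vcomp_id_r, F2_id, vcomp_id_l. }
  exists d. apply is_fhom2_iff. now rewrite Hd, vcomp_id_l.
Qed.

Lemma invertible2_fid_cell (cl : cleavage P) (b : ob B) (x : ob E) (px : F0 P x = b) :
  invertible2 (fid_cell cl px).
Proof.
  apply invertible2_of_F2. rewrite F2_fid_cell.
  repeat apply invertible2_vcomp;
    auto using lphi0_invertible, invertible2_idover_id, invertible2_eqcell.
Qed.

Lemma fid_is_lift (cl : cleavage P) (b : ob B) (x y : ob E) (px : F0 P x = b) (f : hom1 x y) :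
  is_lift (runit (F1 P f) • (id2 (F1 P f) ⋆ idover_id px))
    (runit f • (id2 f ⋆ fid_cell cl px)) (eqcell (projT2 (fid cl px))).
Proof.
  split; [| split; [| split]].
  - apply invertible2_vcomp; [apply invertible2_runit |].
    apply invertible2_hcomp; [apply invertible2_id | apply invertible2_idover_id].
  - apply invertible2_vcomp; [apply invertible2_runit |].
    apply invertible2_hcomp; [apply invertible2_id | apply invertible2_fid_cell].
  - apply invertible2_eqcell.
  - rewrite F2_vcomp, <- (vcomp_assoc (F2 P (runit f))), lphi_nat, F2_id, F2_fid_cell.
    unfold id_over. rewrite !lwhisker_vcomp, !vcomp_assoc.
    rewrite <- (vcomp_assoc (F2 P (runit f))), <- lphi_runit. reflexivity.
Qed.

Lemma lphi_counit (b : ob B) (x y : ob E) (px : F0 P x = b) (py : F0 P y = b)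
  (f : fhom1 px py) (g : fhom1 py px) (rho : hom2 (comp1 (projT1 f) (projT1 g)) (id1 y)) :
  F2 P rho • comp_over f g = id_over py ->
  F2 P rho • lphi P (projT1 f) (projT1 g)
  = lphi0 P y
    • (idover_id py • idover_comp_inv py px py • (eqcell (projT2 f) ⋆ eqcell (projT2 g))).
Proof.
  unfold comp_over, id_over. intro Hrho.
  apply (vcomp_inj_r (c := (eqcell (eq_sym (projT2 f)) ⋆ eqcell (eq_sym (projT2 g)))
                           • idover_comp py px py)).
  { apply invertible2_vcomp; [| apply invertible2_idover_comp].
    apply invertible2_hcomp; apply invertible2_eqcell. }
  rewrite <- vcomp_assoc, Hrho, <- !vcomp_assoc. f_equal.
  rewrite (vcomp_assoc (eqcell _ ⋆ eqcell _)), <- hcomp_vcomp, !eqcell_sym_r, hcomp_id,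
    vcomp_id_l, idover_comp_inv_l, vcomp_id_r.
  reflexivity.
Qed.

Lemma invertible2_fcomp_cell (cl : cleavage P) (b : ob B) (x y z : ob E) (px : F0 P x = b)
  (py : F0 P y = b) (pz : F0 P z = b) (k : fhom1 py pz) (h : fhom1 px py) :
  invertible2 (lphi P (projT1 k) (projT1 h)) -> invertible2 (fcomp_cell cl k h).
Proof.
  intro Hphi. apply invertible2_of_F2. rewrite F2_fcomp_cell. unfold comp_over.
  repeat apply invertible2_vcomp;
    auto using invertible2_hcomp, invertible2_eqcell, invertible2_idover_comp.
Qed.

Lemma fcomp_is_lift (cl : cleavage P) (b : ob B) (x y : ob E) (px : F0 P x = b)
  (py : F0 P y = b) (f : fhom1 px py) (g : fhom1 py px)
  (rho : hom2 (comp1 (projT1 f) (projT1 g)) (id1 y)) :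
  invertible2 rho -> invertible2 (lphi P (projT1 g) (projT1 f)) ->
  F2 P rho • comp_over f g = id_over py ->
  is_lift (runit (F1 P (projT1 f)) • (id2 (F1 P (projT1 f)) ⋆ idover_id px))
    (lunit (projT1 f) • (rho ⋆ id2 (projT1 f)) • assoc_inv (projT1 f) (projT1 g) (projT1 f)
     • (id2 (projT1 f) ⋆ fcomp_cell cl g f))
    (eqcell (projT2 (fcomp cl g f))).
Proof.
  intros Hrho Hphi Hover. apply lphi_counit in Hover.
  split; [| split; [| split]].
  - apply invertible2_vcomp; [apply invertible2_runit |].
    apply invertible2_hcomp; [apply invertible2_id | apply invertible2_idover_id].
  - repeat apply invertible2_vcomp;
      auto using invertible2_lunit, invertible2_assoc_inv, invertible2_hcomp, invertible2_id,
        invertible2_fcomp_cell.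
  - apply invertible2_eqcell.
  - rewrite <- (idover_triangle (projT2 f) (projT2 g)), !F2_vcomp.
    rewrite <- (vcomp_assoc _ (F2 P (id2 _ ⋆ fcomp_cell cl g f))), lphi_nat, F2_id,
      F2_fcomp_cell.
    unfold comp_over. rewrite !lwhisker_vcomp, <- !vcomp_assoc.
    rewrite (vcomp_tail3 (lphi_assoc_inv P _ _ _)), <- !vcomp_assoc.
    rewrite (vcomp_tail2 (lphi_nat P _ _)), F2_id, <- !vcomp_assoc.
    rewrite (vcomp_tail2 (eq_sym (rwhisker_vcomp _ _ _))), Hover,
      (rwhisker_vcomp _ (lphi0 P y)), <- !vcomp_assoc.
    rewrite (vcomp_tail3 (eq_sym (lphi_lunit P _))).
    reflexivity.
Qed.

Lemma fiber_cell_to_fid (cl : cleavage P) (b : ob B) (x y : ob E) (px : F0 P x = b)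
  (py : F0 P y = b) (k : fhom1 py px) (h : fhom1 px py)
  (c : hom2 (comp1 (projT1 k) (projT1 h)) (id1 x)) :
  F2 P c • comp_over k h = id_over px ->
  exists a : hom2 (projT1 (fcomp cl k h)) (projT1 (fid cl px)),
    is_fhom2 (h := fcomp cl k h) (h' := fid cl px) a.
Proof.
  intro Hc. pose proof HP as [_ [_ Hloc]].
  destruct (proj1 (Hloc x x) _ _ (fid_cell cl px) _ (c • fcomp_cell cl k h)
              (eqcell (eq_trans (projT2 (fcomp cl k h)) (eq_sym (projT2 (fid cl px))))))
    as [a [[Ha _] _]].
  { rewrite F2_fid_cell, F2_vcomp, F2_fcomp_cell, vcomp_assoc, Hc, <- !vcomp_assoc,
      eqcell_trans.
    f_equal. apply eqcell_pi. }
  exists a. apply is_fhom2_iff. rewrite Ha, eqcell_trans. apply eqcell_pi.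
Qed.

Lemma fiber_cell_to_fid_of_counit (cl : cleavage P) (b : ob B) (x y : ob E)
  (px : F0 P x = b) (py : F0 P y = b) (f : fhom1 px py) (g : fhom1 py px)
  (rho : hom2 (comp1 (projT1 f) (projT1 g)) (id1 y)) :
  invertible2 rho -> invertible2 (lphi P (projT1 g) (projT1 f)) ->
  F2 P rho • comp_over f g = id_over py ->
  exists a : hom2 (projT1 (fcomp cl g f)) (projT1 (fid cl px)),
    is_fhom2 (h := fcomp cl g f) (h' := fid cl px) a.
Proof.
  intros Hrho Hphi Hover.
  exact (fiber_cell_of_lifts (fcomp_is_lift cl Hrho Hphi Hover) (fid_is_lift cl px _)).
Qed.

(* Lift [id_b] through the cartesian [f] to [ht] with [f ∘ ht ≅ v], where [v] lifts
   [id (P y)] along [lphi0 y]; then replace [ht] by an isomorphic 1-morphism lying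
   strictly over [id_b]. *)
Lemma right_pseudo_inverse (b : ob B) (x y : ob E) (px : F0 P x = b) (py : F0 P y = b)
  (f : fhom1 px py) :
  exists (g : fhom1 py px) (rho : hom2 (comp1 (projT1 f) (projT1 g)) (id1 y)),
    invertible2 rho /\ invertible2 (lphi P (projT1 f) (projT1 g)) /\
    F2 P rho • comp_over f g = id_over py.
Proof.
  destruct f as [f ef]. pose proof HP as [Hcart _].
  destruct (local_lift (lphi0_invertible y)) as [v [ev [av [Hav Hav_inv]]]].
  set (al := eqcell (eq_sym ev) • idover_id py • idover_comp_inv py px py
             • (eqcell ef ⋆ id2 (idover py px))).
  assert (Hal : invertible2 al).
  { repeat apply invertible2_vcomp; auto using invertible2_eqcell, invertible2_idover_id,
      invertible2_idover_comp_inv, invertible2_hcomp, invertible2_id. }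
  destruct (proj1 (Hcart x y f) y v (idover py px) al Hal) as [ht [at_ [bt Hlift]]].
  pose proof (is_lift_lphi_invertible Hlift) as Hphi.
  destruct Hlift as [_ [Hat [[bt' [Hbt1 Hbt2]] Hlift]]].
  destruct (local_lift (invertible2_inverse Hbt1 Hbt2)) as [g [eg [ga [Hga [ga' [Hga1 Hga2]]]]]].
  exists (existT _ g eg), (av • at_ • (id2 f ⋆ ga)). cbn. split; [| split].
  - repeat apply invertible2_vcomp; try assumption.
    apply invertible2_hcomp; [apply invertible2_id | now exists ga'].
  - apply (lphi_invertible_transport (mu := ga')); [| exact Hphi].
    now exists ga.
  - unfold comp_over, id_over. cbn.
    rewrite !F2_vcomp, <- !vcomp_assoc.
    rewrite (vcomp_tail2 (lphi_nat P _ _)), F2_id, Hga, <- !vcomp_assoc.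
    rewrite (vcomp_tail2 (eq_sym Hlift)), <- !vcomp_assoc.
    rewrite (vcomp_tail2 (eq_sym (lwhisker_vcomp _ _ _))), (vcomp_assoc bt), Hbt2, vcomp_id_l.
    unfold al. rewrite <- !vcomp_assoc.
    rewrite (vcomp_tail2 (eq_sym (hcomp_rwhisker_lwhisker _ _))).
    rewrite (vcomp_tail2 (eq_sym (hcomp_vcomp _ _ _ _))), !eqcell_sym_r, hcomp_id, vcomp_id_l.
    rewrite idover_comp_inv_l, vcomp_id_r, Hav, <- vcomp_assoc.
    now rewrite (vcomp_tail2 (eqcell_sym_r ev)), vcomp_id_l.
Qed.

End Fibration.

Theorem proposition3p26 (E B : bicat) (P : lax_functor E B) :
  fibered_in_pseudogroupoids P ->
  forall (cl : cleavage P) (b : ob B), fiber_is_pseudogroupoid cl b.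
Proof.
  intros HP cl b. split.
  - intros x y px py h h' a. apply (fiber_hom2_finvertible HP).
  - intros x y px py f.
    destruct (right_pseudo_inverse HP f) as (g & rho & Hrho & _ & Hcounit).
    destruct (right_pseudo_inverse HP g) as (f' & rho' & Hrho' & Hphi' & _).
    destruct (pseudo_inverse_iso Hrho Hrho') as [mu Hmu].
    pose proof (lphi_invertible_transport Hmu Hphi') as Hphi.
    exists g. split.
    + destruct (fiber_cell_to_fid_of_counit HP cl Hrho Hphi Hcounit) as [a Ha].
      exists a. split; [exact Ha | exact (fiber_hom2_finvertible HP Ha)].
    + destruct (fiber_cell_to_fid HP cl Hcounit) as [a Ha].
      exists a. split; [exact Ha | exact (fiber_hom2_finvertible HP Ha)].
Qed.
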